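(* Let $S$ be a stochastic operator and let $(V_1,\varphi_1)$ and $(V_2,\varphi_2)$ be two pairs, each consisting of a measurable weight $V_i:\Omega\to[1,\infty)$ and an admissible rate function $\varphi_i$, such that $\varphi_2(V_2)\ge V_1$ on $\Omega$. Assume that for each $i\in\{1,2\}$, $S$ is a stochastic operator on $\mathcal M_{V_i}$ and: (1) there exist $K_i>0$, $0<\varsigma_i<1$ with $\|S\mu\|_{V_i}+\varsigma_i\|\mu\|_{\varphi_i(V_i)}\le\|\mu\|_{V_i}+K_i\|\mu\|$ for all $\mu\in\mathcal M_{V_i}$; (2) for some integer $N_i\ge1$ there exist $0<\gamma_{H,i}<1$ and $A_i>K_i/\varsigma_i$ such that for every $\nu\in\mathcal N_{\varphi_i(V_i)}$ with $\|\nu\|_{\varphi_i(V_i)}\le A_i\|\nu\|$ one has $\|S^{N_i}\nu\|\le\gamma_{H,i}\|\nu\|$. Then $S$ has at most one equilibrium in $\mathcal P_{\varphi_2(V_2)}$.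
   Context: Let $(\Omega,\mathcal E)$ be a measurable space. $\mathcal M$ denotes the space of finite signed measures on $\Omega$, $\mathcal P\subset\mathcal M$ the set of probability measures, and $\mathcal N=\{\nu\in\mathcal M:\nu(\Omega)=0\}$. For $\mu\in\mathcal M$ with Hahn–Jordan decomposition $\mu=\mu_+-\mu_-$, $|\mu|=\mu_++\mu_-$ and $\|\mu\|=\int_\Omega d|\mu|$ is the total variation norm. For a measurable $W:\Omega\to[1,\infty)$, $\|\mu\|_W=\int_\Omega W\,d|\mu|$, $\mathcal M_W=\{\mu\in\mathcal M:\|\mu\|_W<\infty\}$, $\mathcal P_W=\mathcal P\cap\mathcal M_W$, $\mathcal N_W=\mathcal N\cap\mathcal M_W$. A stochastic operator is a linear map $S:\mathcal M\to\mathcal M$ with $S(\mathcal P)\subseteq\mathcal P$; it is a stochastic operator on $\mathcal M_W$ if moreover $S(\mathcal M_W)\subseteq\mathcal M_W$ and the restriction is bounded for $\|\cdot\|_W$. An admissible rate function is a concave function $\varphi:[1,\infty)\to[1,\infty)$ with $\varphi(1)=1$ and $\varphi(v)/v\to0$ as $v\to\infty$; $\varphi(V)$ denotes the composition $\varphi\circ V$. An equilibrium of $S$ is a $\mu\in\mathcal P$ with $S\mu=\mu$. *)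

From HB Require Import structures.
From mathcomp Require Import all_boot all_order all_algebra.
From mathcomp Require Import all_classical all_reals all_analysis.
Set Implicit Arguments. Unset Strict Implicit. Unset Printing Implicit Defensive.
Import Order.TTheory GRing.Theory Num.Theory.
Import numFieldNormedType.Exports.
Local Open Scope classical_set_scope.
Local Open Scope ring_scope.

Section Defs.
Context {R : realType} {d : measure_display} {T : measurableType d}.

Notation M := ({charge set T -> \bar R}).

Definition ceq (mu nu : M) := forall A, measurable A -> mu A = nu A.

(* a Hahn decomposition, chosen once and for all (the variation |mu| does not
   depend on the choice, cf. Hahn_decomposition_uniq). *)
Lemma hahn_ex (nu : M) : exists PN : set T * set T, hahn_decomposition nu PN.1 PN.2.
Proof. by have [P [N h]] := Hahn_decomposition nu; exists (P, N). Qed.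

Definition hahn_PN (nu : M) := cid (hahn_ex nu).

Definition cvar (nu : M) := charge_variation (proj2_sig (hahn_PN nu)).

Definition wnorm (W : T -> R) (nu : M) : \bar R := (\int[cvar nu]_x (W x)%:E)%E.

Definition tvnorm (nu : M) : \bar R := wnorm (fun _ => 1) nu.

Definition in_MW (W : T -> R) (nu : M) := (wnorm W nu < +oo)%E.

Definition is_prob (mu : M) :=
  (forall A, measurable A -> (0 <= mu A)%E) /\ mu setT = 1%E.

Definition linear_op (S : M -> M) :=
  forall (a b : R) (mu nu : M),
    ceq (S (cadd (cscale a mu) (cscale b nu))) (cadd (cscale a (S mu)) (cscale b (S nu))).

Definition stochastic_operator (S : M -> M) :=
  linear_op S /\ forall mu, is_prob mu -> is_prob (S mu).

Definition stochastic_operator_on (W : T -> R) (S : M -> M) :=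
  stochastic_operator S /\
  (forall mu, in_MW W mu -> in_MW W (S mu)) /\
  exists C : R, forall mu, in_MW W mu -> (wnorm W (S mu) <= C%:E * wnorm W mu)%E.

Definition weight (W : T -> R) := measurable_fun setT W /\ forall x, 1 <= W x.

End Defs.

(* admissible rate function phi : [1,oo) -> [1,oo) (values of phi outside
   [1,oo) are irrelevant) *)
Definition admissible_rate {R : realType} (phi : R -> R) :=
  [/\ (forall x y t : R, 1 <= x -> 1 <= y -> 0 <= t <= 1 ->
         t * phi x + (1 - t) * phi y <= phi (t * x + (1 - t) * y)),
      (forall v : R, 1 <= v -> 1 <= phi v),
      phi 1 = 1 &
      (phi v / v) @[v --> +oo] --> (0 : R)].

Definition drift_and_contraction {R : realType} {d : measure_display}
    {T : measurableType d} (S : {charge set T -> \bar R} -> {charge set T -> \bar R})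
    (V : T -> R) (phi : R -> R) :=
  exists K vs : R, [/\ 0 < K, 0 < vs < 1,
    (forall mu, in_MW V mu ->
       (wnorm V (S mu) + vs%:E * wnorm (phi \o V) mu <= wnorm V mu + K%:E * tvnorm mu)%E) &
    exists N : nat, (1 <= N)%N /\ exists gH A : R,
      [/\ 0 < gH < 1, K / vs < A &
        forall nu : {charge set T -> \bar R},
          nu setT = 0%E -> in_MW (phi \o V) nu ->
          (wnorm (phi \o V) nu <= A%:E * tvnorm nu)%E ->
          (tvnorm (iter N S nu) <= gH%:E * tvnorm nu)%E]].

(* The difference [nu] of two equilibria is a fixed point of [S] of total mass
   zero, and [V1 <= phi2 V2] gives it a finite [V1]-norm.  At a fixed point the
   drift inequality of the pair (V1, phi1) reduces to
   [vs ||nu||_(phi1 V1) <= K ||nu||], which puts [nu] in the cone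
   [||nu||_(phi1 V1) <= A ||nu||] where the contraction applies; hence
   [||nu|| = ||S^N nu|| <= gH ||nu||], i.e. [||nu|| = 0].  The second pair
   enters only through [V1 <= phi2 V2]. *)
From HB Require Import structures.
From mathcomp Require Import all_boot all_order all_algebra.
From mathcomp Require Import all_classical all_reals all_analysis.
From mathcomp Require Import lra measurable_realfun.
Set Implicit Arguments. Unset Strict Implicit. Unset Printing Implicit Defensive.
Import Order.TTheory GRing.Theory Num.Theory.
Local Open Scope classical_set_scope.
Local Open Scope ring_scope.
Local Open Scope ereal_scope.

Section charge_norms.
Context {R : realType} {d : measure_display} {T : measurableType d}.
Notation M := ({charge set T -> \bar R}).

Definition csub (mu nu : M) : M := cadd (cscale 1 mu) (cscale (-1) nu).

Lemma csubE (mu nu : M) A : csub mu nu A = mu A - nu A.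
Proof. by rewrite /= /cadd /= /cscale /= mul1e mulN1e. Qed.

Lemma csub_eq0 (mu nu : M) A : measurable A -> (csub mu nu A == 0) = (mu A == nu A).
Proof.
by move=> mA; rewrite csubE sube_eq ?add0e ?fin_num_adde_defl ?fin_num_measure.
Qed.

Lemma cvarE (nu : M) A : measurable A ->
  cvar nu A = nu (A `&` (sval (hahn_PN nu)).1) - nu (A `&` (sval (hahn_PN nu)).2).
Proof.
move=> mA; rewrite /cvar /charge_variation /=.
by rewrite jordan_posE jordan_negE cjordan_posE cjordan_negE /crestr0 mem_set.
Qed.

Lemma hahn_decomposition_ceq (mu nu : M) P N : ceq mu nu ->
  hahn_decomposition mu P N -> hahn_decomposition nu P N.
Proof.
move=> munu [[mP hP] [mN hN] PNT PN0]; split => //; split => // A mA;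
  rewrite -munu //; [exact: hP | exact: hN].
Qed.

Lemma cvar_ceq (mu nu : M) A : ceq mu nu -> measurable A -> cvar mu A = cvar nu A.
Proof.
move=> munu mA; rewrite !cvarE //.
case: (hahn_PN mu) => [[P1 N1] /= h1]; case: (hahn_PN nu) => [[P2 N2] /= h2].
have [[mP1 _] [mN1 _] _ _] := h1.
have [e1 e2] := Hahn_decomposition_uniq (hahn_decomposition_ceq munu h1) h2 mA.
by rewrite !munu ?e1 ?e2 //; apply: measurableI.
Qed.

Lemma wnorm_ceq (W : T -> R) (mu nu : M) : ceq mu nu -> wnorm W mu = wnorm W nu.
Proof.
by move=> munu; apply: eq_measure_integral => A mA _; apply: cvar_ceq.
Qed.

Lemma wnorm_ge0 (W : T -> R) (nu : M) : (forall x, (0 <= W x)%R) -> 0 <= wnorm W nu.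
Proof. by move=> W0; apply: integral_ge0 => x _; rewrite lee_fin. Qed.

(* Unlike [ge0_le_integral], no measurability is needed: the integral is a
   supremum over the simple functions below the integrand. *)
Lemma le_wnorm (W1 W2 : T -> R) (nu : M) : (forall x, (0 <= W1 x)%R) ->
  (forall x, (W1 x <= W2 x)%R) -> wnorm W1 nu <= wnorm W2 nu.
Proof.
move=> W10 W12; have W20 x : (0 <= W2 x)%R := le_trans (W10 x) (W12 x).
rewrite /wnorm !ge0_integralE => [|x _|x _]; rewrite ?lee_fin //.
apply: ereal_sup_le => _ [h hW1 <-]; exists h => //= x.
by apply: le_trans (hW1 x) _; rewrite !patch_setT lee_fin.
Qed.

Lemma tvnormE (nu : M) : tvnorm nu = cvar nu setT.
Proof. by rewrite /tvnorm /wnorm integral_cst // mul1e. Qed.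

Lemma tvnorm_fin_num (nu : M) : tvnorm nu \is a fin_num.
Proof. by rewrite tvnormE fin_num_measure. Qed.

Lemma tvnorm_eq0 (nu : M) A : tvnorm nu = 0 -> measurable A -> nu A = 0.
Proof.
rewrite tvnormE => nu0 mA; apply/eqP; rewrite -abse_eq0 eq_le abse_ge0 andbT.
rewrite -nu0; apply: le_trans (abse_charge_variation (proj2_sig (hahn_PN nu)) mA) _.
by apply: le_measure; rewrite ?inE.
Qed.

Lemma cvar_csub_le (mu1 mu2 : M) A :
  (forall B, measurable B -> 0 <= mu1 B) -> (forall B, measurable B -> 0 <= mu2 B) ->
  measurable A -> cvar (csub mu1 mu2) A <= cvar mu1 A + cvar mu2 A.
Proof.
move=> mu10 mu20 mA; rewrite cvarE //.
case: (hahn_PN _) => [[P N] /= [[mP _] [mN _] PNT PN0]].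
have mAP : measurable (A `&` P) by exact: measurableI.
have mAN : measurable (A `&` N) by exact: measurableI.
have le_cvar (mu : M) : mu A <= cvar mu A.
  exact: le_trans (lee_abs _) (abse_charge_variation _ mA).
apply: le_trans (leeD (le_cvar mu1) (le_cvar mu2)).
rewrite !csubE (charge_partition mu1 mA mP mN PNT PN0).
rewrite (charge_partition mu2 mA mP mN PNT PN0).
move: (mu10 _ mAP) (mu10 _ mAN) (mu20 _ mAP) (mu20 _ mAN).
rewrite -(fineK (fin_num_measure mu1 _ mAP)) -(fineK (fin_num_measure mu1 _ mAN)).
rewrite -(fineK (fin_num_measure mu2 _ mAP)) -(fineK (fin_num_measure mu2 _ mAN)).
by rewrite -!EFinB -!EFinD !lee_fin; lra.
Qed.

Lemma wnorm_csub_le (W : T -> R) (mu1 mu2 : M) :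
  measurable_fun setT W -> (forall x, (0 <= W x)%R) ->
  (forall B, measurable B -> 0 <= mu1 B) -> (forall B, measurable B -> 0 <= mu2 B) ->
  wnorm W (csub mu1 mu2) <= wnorm W mu1 + wnorm W mu2.
Proof.
move=> mW W0 mu10 mu20; have mWE := proj2 (measurable_EFinP setT W) mW.
rewrite /wnorm -ge0_integral_measure_add //; last by move=> x _; rewrite lee_fin.
apply: ge0_le_measure_integral => // A mA.
by move: (cvar_csub_le mu10 mu20 mA); rewrite -measure_addE.
Qed.

End charge_norms.

Section stochastic_operator.
Context {R : realType} {d : measure_display} {T : measurableType d}.
Notation M := ({charge set T -> \bar R}).
Variables (S : M -> M) (mu : M).
Hypotheses (hS : stochastic_operator S) (mu_prob : is_prob mu).

(* [S] is linear only up to [ceq]; that it respects [ceq] comes from positivity: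
   [mu + s Z] is a probability for every real [s] when [Z] is null, so the real
   line [S mu A + s S Z A] stays nonnegative, forcing [S Z A = 0]. *)
Lemma stochastic_operator_null (Z : M) : (forall A, measurable A -> Z A = 0) ->
  forall A, measurable A -> S Z A = 0.
Proof.
case: hS mu_prob => lin prob [mu_ge0 mu_setT] Z0 A mA.
set x := fine (S mu A); set y := fine (S Z A).
have xsy_ge0 s : (0 <= x + s * y)%R.
  have : is_prob (cadd (cscale 1 mu) (cscale s Z)).
    by split => [B mB|]; rewrite /= /cadd /= /cscale /= Z0 // mule0 adde0 mul1e ?mu_ge0 ?mu_setT.
  case/prob => /(_ A mA); rewrite (lin 1%R s mu Z A mA) /= /cadd /= /cscale /=.
  rewrite -(fineK (fin_num_measure (S mu) A mA)) -(fineK (fin_num_measure (S Z) A mA)).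
  by rewrite -!EFinM -EFinD lee_fin mul1r.
suff y0 : y = 0%R by rewrite -(fineK (fin_num_measure (S Z) A mA)) -/y y0.
apply: contraTeq (xsy_ge0 (- (x + 1) / y)%R) => y_neq0.
by rewrite mulrAC -mulrA divff // mulr1 -ltNge; lra.
Qed.

Lemma stochastic_operator_ceq (X Y : M) : ceq X Y -> ceq (S X) (S Y).
Proof.
move=> XY A mA.
have XY0 B : measurable B -> csub X Y B = 0 by move=> mB; apply/eqP; rewrite csub_eq0 // XY.
have := stochastic_operator_null XY0 mA; rewrite (hS.1 1%R (-1)%R X Y A mA).
by move/eqP; rewrite csub_eq0 // => /eqP.
Qed.

Lemma csub_fixed (mu1 mu2 : M) : ceq (S mu1) mu1 -> ceq (S mu2) mu2 ->
  ceq (S (csub mu1 mu2)) (csub mu1 mu2).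
Proof.
move=> fix1 fix2 A mA; rewrite (hS.1 1%R (-1)%R mu1 mu2 A mA) /= /cadd /= /cscale /=.
by rewrite fix1 // fix2.
Qed.

End stochastic_operator.

Section fixed_point.
Context {R : realType} {d : measure_display} {T : measurableType d}.
Notation M := ({charge set T -> \bar R}).
Variable S : M -> M.
Hypothesis S_ceq : forall X Y : M, ceq X Y -> ceq (S X) (S Y).

Lemma iter_fixed (nu : M) n : ceq (S nu) nu -> ceq (iter n S nu) nu.
Proof.
by move=> Snu; elim: n => [|n IHn] A mA //=; rewrite (S_ceq IHn mA) Snu.
Qed.

Lemma drift_and_contraction_fixed_null (V : T -> R) (phi : R -> R) (nu : M) :
  (forall x, (0 <= V x)%R) -> (forall x, (0 <= phi (V x))%R) ->
  drift_and_contraction S V phi ->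
  nu setT = 0 -> in_MW V nu -> ceq (S nu) nu -> tvnorm nu = 0.
Proof.
move=> V0 phiV0 [K [vs [_ /andP[vs0 _] drift [N [_ [gH [A [/andP[_ gH1] KA contr]]]]]]]].
move=> nu0 nuV Snu.
have tv0 : 0 <= tvnorm nu by apply: wnorm_ge0 => _; apply: ler01.
have tvfin := tvnorm_fin_num nu.
have phiV_le : wnorm (phi \o V) nu <= (K / vs)%:E * tvnorm nu.
  have := drift nu nuV; rewrite (wnorm_ceq _ Snu) leeD2lE; last first.
    by rewrite ge0_fin_numE ?wnorm_ge0.
  by rewrite mulrC EFinM -muleA lee_pdivlMl.
have phiV_leA : wnorm (phi \o V) nu <= A%:E * tvnorm nu.
  by apply: le_trans phiV_le (lee_wpmul2r tv0 _); rewrite lee_fin; apply: ltW.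
have nu_phiV : in_MW (phi \o V) nu.
  by apply: le_lt_trans phiV_leA _; rewrite -(fineK tvfin) -EFinM ltry.
have := contr nu nu0 nu_phiV phiV_leA.
have -> : tvnorm (iter N S nu) = tvnorm nu by apply: wnorm_ceq; apply: iter_fixed.
move: tvfin tv0; case: (tvnorm nu) => [r _|//|//]; rewrite !lee_fin => r0 rg.
by congr EFin; nra.
Qed.

End fixed_point.

Local Close Scope ereal_scope.

Theorem corollary4p5 (R : realType) (d : measure_display) (T : measurableType d)
    (S : {charge set T -> \bar R} -> {charge set T -> \bar R})
    (V1 V2 : T -> R) (phi1 phi2 : R -> R) :
  stochastic_operator S ->
  weight V1 -> weight V2 ->
  admissible_rate phi1 -> admissible_rate phi2 ->
  (forall x, V1 x <= phi2 (V2 x)) ->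
  stochastic_operator_on V1 S -> stochastic_operator_on V2 S ->
  drift_and_contraction S V1 phi1 -> drift_and_contraction S V2 phi2 ->
  forall mu1 mu2 : {charge set T -> \bar R},
    is_prob mu1 -> in_MW (phi2 \o V2) mu1 -> ceq (S mu1) mu1 ->
    is_prob mu2 -> in_MW (phi2 \o V2) mu2 -> ceq (S mu2) mu2 ->
    ceq mu1 mu2.
Proof.
move=> hS [mV1 V1_ge1] _ [_ phi1_ge1 _ _] _ V1_le _ _ hdc1 _.
move=> mu1 mu2 p1 f1 fix1 p2 f2 fix2.
have V1_ge0 x : (0 <= V1 x)%R := le_trans ler01 (V1_ge1 x).
have V1_le_phi2V2 (mu : {charge set T -> \bar R}) :
    in_MW (phi2 \o V2) mu -> in_MW V1 mu.
  by move=> hmu; apply: le_lt_trans (le_wnorm _ V1_ge0 V1_le) hmu.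
have nu_V1 : in_MW V1 (csub mu1 mu2).
  apply: le_lt_trans (wnorm_csub_le mV1 V1_ge0 p1.1 p2.1) _.
  by apply: lte_add_pinfty; apply: V1_le_phi2V2.
have nu_null : tvnorm (csub mu1 mu2) = 0.
  apply: (drift_and_contraction_fixed_null (stochastic_operator_ceq hS p1) V1_ge0 _ hdc1) => //.
  - by move=> x; apply: le_trans (phi1_ge1 _ (V1_ge1 x)).
  - by rewrite csubE p1.2 p2.2 subee.
  - exact: csub_fixed.
by move=> A mA; apply/eqP; rewrite -csub_eq0 //; apply/eqP; apply: tvnorm_eq0.
Qed.
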